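(* Let $X$ be a connected, locally compact Polish space with a partial order $\le$ whose strict part is $<$, and suppose there is $M\subseteq X$ such that: (i) $M$ has at least two elements, is connected, and is totally ordered by $<$; (ii) for every $m\in M$ and every neighborhood $U$ of $m$ in $X$ there are $\underline m,\overline m\in M$ with $m\in[\underline m,\overline m]\subseteq U$, where moreover $\overline m$ can be chosen with $m<\overline m$ if $m$ is not the largest element of $M$, and $\underline m$ can be chosen with $\underline m<m$ if $m$ is not the smallest element of $M$; (iii) for every bounded sequence $(x_n)$ in $X$ there are $\underline m,\overline m\in M$ with $\underline m\le x_n\le\overline m$ for all sufficiently large $n$. Let $\succeq$ be a continuous strictly monotone preference on $X$. Then for every $x\in X$ there is a unique $m^*(x)\in M$ with $x\sim m^*(x)$. Moreover, for any continuous strictly increasing $u:X\to\mathbb{R}$, the function $u_\succeq(x)=u(m^*(x))$ is a continuous utility representation of $\succeq$.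
   Context: $[\underline m,\overline m]=\{z\in X:\underline m\le z\le\overline m\}$. A preference is a complete transitive binary relation; continuous if closed in $X\times X$; strictly monotone if $y<x$ implies $x\succ y$; $x\sim y$ means $x\succeq y$ and $y\succeq x$. A function $u$ is strictly increasing if $x<y$ implies $u(x)<u(y)$; it represents $\succeq$ if $x\succeq y\iff u(x)\ge u(y)$. Boundedness in (iii) refers to a metric compatible with the topology of $X$. *)

From HB Require Import structures.
From mathcomp Require Import all_boot all_order all_algebra.
From mathcomp Require Import all_classical all_reals all_analysis.
Set Implicit Arguments. Unset Strict Implicit. Unset Printing Implicit Defensive.
Import Order.TTheory GRing.Theory Num.Theory.
Import numFieldTopology.Exports numFieldNormedType.Exports.
Local Open Scope classical_set_scope.
Local Open Scope ring_scope.

Definition is_metric {R : realType} {X : Type} (d : X -> X -> R) : Prop :=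
  (forall x y, 0 <= d x y) /\ (forall x y, d x y = 0 <-> x = y) /\
  (forall x y, d x y = d y x) /\ (forall x y z, d x z <= d x y + d y z).

Definition compatible_metric {R : realType} {X : topologicalType}
  (d : X -> X -> R) : Prop :=
  is_metric d /\
  forall A : set X, open A <->
    (forall x, A x -> exists2 e : R, 0 < e & [set y | d x y < e] `<=` A).

Definition complete_metric {R : realType} {X : topologicalType}
  (d : X -> X -> R) : Prop :=
  forall s : nat -> X,
    (forall e : R, 0 < e -> exists N : nat, forall n m : nat,
        (N <= n)%N -> (N <= m)%N -> d (s n) (s m) < e) ->
    exists l : X, s @ \oo --> l.

Definition separable_space (X : topologicalType) : Prop :=
  exists D : set X, countable D /\ closure D = setT.

Definition polish (R : realType) (X : topologicalType) : Prop :=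
  separable_space X /\
  exists d : X -> X -> R, compatible_metric d /\ complete_metric d.

Definition partial_order {X : Type} (le : X -> X -> Prop) : Prop :=
  (forall x, le x x) /\ (forall x y, le x y -> le y x -> x = y) /\
  (forall x y z, le x y -> le y z -> le x z).

Definition strict {X : Type} (le : X -> X -> Prop) (x y : X) : Prop :=
  le x y /\ x <> y.

Definition oint {X : Type} (le : X -> X -> Prop) (a b : X) : set X :=
  [set z | le a z /\ le z b].

Definition preference {X : Type} (pref : X -> X -> Prop) : Prop :=
  (forall x y, pref x y \/ pref y x) /\
  (forall x y z, pref x y -> pref y z -> pref x z).

Definition continuous_pref {X : topologicalType} (pref : X -> X -> Prop) : Prop :=
  closed [set p : X * X | pref p.1 p.2].

Definition spref {X : Type} (pref : X -> X -> Prop) (x y : X) : Prop :=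
  pref x y /\ ~ pref y x.

Definition indiff {X : Type} (pref : X -> X -> Prop) (x y : X) : Prop :=
  pref x y /\ pref y x.

Definition strictly_monotone {X : Type} (le : X -> X -> Prop)
  (pref : X -> X -> Prop) : Prop :=
  forall x y, strict le y x -> spref pref x y.

Definition strictly_increasing {R : realType} {X : Type}
  (le : X -> X -> Prop) (u : X -> R) : Prop :=
  forall x y, strict le x y -> u x < u y.

Definition represents {R : realType} {X : Type} (pref : X -> X -> Prop)
  (u : X -> R) : Prop :=
  forall x y, pref x y <-> u y <= u x.

Definition bounded_seq {R : realType} {X : Type} (d : X -> X -> R)
  (s : nat -> X) : Prop :=
  exists x0 : X, exists r : R, forall n, d x0 (s n) <= r.

From HB Require Import structures.
From mathcomp Require Import all_boot all_order all_algebra.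
From mathcomp Require Import all_classical all_reals all_analysis.
Import Order.TTheory GRing.Theory Num.Theory.
Import numFieldTopology.Exports numFieldNormedType.Exports.
Local Open Scope classical_set_scope.
Local Open Scope ring_scope.

(* For x in X, the elements of M weakly above x and those weakly below x form
   two closed subsets of M (continuity of the preference) covering M
   (completeness). Applying (iii) to the constant sequence x gives elements
   lo <= x <= hi of M, which lie in one set each by strict monotonicity, so by
   connectedness of M the two sets meet: this is m*(x). It is unique because
   distinct elements of M are strictly comparable, hence strictly ranked.
   Along the chain M, a strictly increasing u ranks exactly as the preference,
   so u o m* represents it. For continuity at x0, (ii) puts an order interval
   [lo, hi] of M inside a given neighbourhood of m*(x0), with hi above m*(x0)
   strictly unless m*(x0) is the top of M; then {x | ~ x >= hi} is an open
   neighbourhood of x0 on which m*(x) < hi, and symmetrically for lo. *)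

Lemma connected_closed_cover {T : topologicalType} {A B C : set T} :
  connected A -> closed B -> closed C -> A `<=` B `|` C ->
  A `&` B !=set0 -> A `&` C !=set0 -> A `&` B `&` C !=set0.
Proof.
move=> cA cB cC ABC AB0 [c [Ac Cc]]; apply: contrapT => nABC.
have AB_eq_AnotC : A `&` B = A `&` ~` C.
  apply/seteqP; split=> x [Ax Bx]; split=> //.
    by move=> Cx; apply: nABC; exists x.
  by case: (ABC x Ax).
have AB_eq : A `&` B = A.
  by apply: cA => //; [exists (~` C) => //; exact: closed_openC | exists B].
have : (A `&` B) c by rewrite AB_eq.
by move=> [_ Bc]; apply: nABC; exists c.
Qed.

Lemma bounded_seq_cst {R : realType} {T : Type} {d : T -> T -> R} (x : T) :
  is_metric d -> bounded_seq d (fun=> x).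
Proof. by move=> [_ [d_eq0 _]]; exists x, 0 => _; rewrite (d_eq0 x x).2. Qed.

Section ClosedRelation.
Context {T : topologicalType} {P : T -> T -> Prop}.
Hypothesis closedP : closed [set p : T * T | P p.1 p.2].

Lemma closed_sectionl c : closed [set x | P x c].
Proof.
apply: (continuous_closedP (fun x => (x, c))).1 closedP => x.
exact: cvg_pair cvg_id (cvg_cst _).
Qed.

Lemma closed_sectionr c : closed [set x | P c x].
Proof.
apply: (continuous_closedP (fun x => (c, x))).1 closedP => x.
exact: cvg_pair (cvg_cst _) cvg_id.
Qed.

Lemma near_not_sectionl c x0 : ~ P x0 c -> \forall x \near x0, ~ P x c.
Proof.
move=> nP; apply: open_nbhs_nbhs; split=> //.
exact/closed_openC/closed_sectionl.
Qed.

Lemma near_not_sectionr c x0 : ~ P c x0 -> \forall x \near x0, ~ P c x.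
Proof.
move=> nP; apply: open_nbhs_nbhs; split=> //.
exact/closed_openC/closed_sectionr.
Qed.

End ClosedRelation.

Section StrictlyMonotonePreference.
Context {T : Type} {le pref : T -> T -> Prop}.
Hypotheses (prefP : preference pref) (pref_mono : strictly_monotone le pref).

Let pref_trans {x y z} : pref x y -> pref y z -> pref x z.
Proof. exact: prefP.2. Qed.

Lemma pref_refl x : pref x x.
Proof. by case: (prefP.1 x x). Qed.

Lemma pref_of_le {x y} : le y x -> pref x y.
Proof.
move=> le_yx; have [<-|neq_yx] := pselect (y = x); first exact: pref_refl.
by have [] := pref_mono x y (conj le_yx neq_yx).
Qed.

Lemma strict_not_pref {x y} : strict le x y -> ~ pref x y.
Proof. by move=> lt_xy; have [] := pref_mono y x lt_xy. Qed.

Context {M : set T}.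
Hypothesis M_chain :
  forall m m', M m -> M m' -> m <> m' -> strict le m m' \/ strict le m' m.

Lemma chain_strict_of_not_pref {a b} :
  M a -> M b -> ~ pref a b -> strict le a b.
Proof.
move=> Ma Mb npref_ab; have [eq_ab|neq_ab] := pselect (a = b).
  by case: npref_ab; rewrite eq_ab; exact: pref_refl.
by case: (M_chain _ _ Ma Mb neq_ab) => // /(pref_mono _ _)[].
Qed.

Lemma chain_indiff_unique {x a b} :
  M a -> M b -> indiff pref x a -> indiff pref x b -> a = b.
Proof.
move=> Ma Mb [xa ax] [xb bx]; apply: contrapT => neq_ab.
case: (M_chain _ _ Ma Mb neq_ab) => /strict_not_pref; apply.
  exact: pref_trans ax xb.
exact: pref_trans bx xa.
Qed.

Lemma chain_pref_iff {R : realType} (u : T -> R) {a b} :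
  strictly_increasing le u -> M a -> M b -> pref a b <-> u b <= u a.
Proof.
move=> u_incr Ma Mb; split=> [pref_ab|le_uba].
  have [->//|neq_ab] := pselect (a = b).
  case: (M_chain _ _ Ma Mb neq_ab) => [/strict_not_pref//|/(u_incr _ _)/ltW//].
apply: contrapT => /(chain_strict_of_not_pref Ma Mb)/(u_incr _ _).
by rewrite ltNge le_uba.
Qed.

Context {ms : T -> T}.
Hypothesis ms_indiff : forall x, M (ms x) /\ indiff pref x (ms x).

Lemma pref_ms x y : pref x y <-> pref (ms x) (ms y).
Proof.
have [[_ [x_msx msx_x]] [_ [y_msy msy_y]]] := (ms_indiff x, ms_indiff y).
split=> [pref_xy|pref_ms_xy].
  exact: pref_trans msx_x (pref_trans pref_xy y_msy).
exact: pref_trans x_msx (pref_trans pref_ms_xy msy_y).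
Qed.

Lemma represents_comp_ms {R : realType} (u : T -> R) :
  strictly_increasing le u -> represents pref (fun x => u (ms x)).
Proof.
move=> u_incr x y; rewrite pref_ms.
exact: chain_pref_iff (ms_indiff x).1 (ms_indiff y).1.
Qed.

End StrictlyMonotonePreference.

Lemma exists_indiff_connected {X : topologicalType} {pref : X -> X -> Prop}
    {M : set X} {x lo hi : X} :
  preference pref -> continuous_pref pref -> connected M ->
  M lo -> M hi -> pref x lo -> pref hi x -> exists m, M m /\ indiff pref x m.
Proof.
move=> [pref_total _] pref_closed M_conn Mlo Mhi x_lo hi_x.
have [|||m [[Mm m_x] x_m]] := connected_closed_cover M_conn
  (closed_sectionl pref_closed x) (closed_sectionr pref_closed x).
- by move=> m _; case: (pref_total m x); [left | right].
- by exists hi.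
- by exists lo.
by exists m.
Qed.

Section ContinuityOfIndifferentChainPoint.
Context {X : topologicalType} {le pref : X -> X -> Prop} {M : set X}.
Hypotheses (le_trans : forall x y z, le x y -> le y z -> le x z)
  (prefP : preference pref) (pref_closed : continuous_pref pref)
  (pref_mono : strictly_monotone le pref)
  (M_chain : forall m m', M m -> M m' -> m <> m' ->
     strict le m m' \/ strict le m' m).
Context {ms : X -> X}.
Hypothesis ms_indiff : forall x, M (ms x) /\ indiff pref x (ms x).

Let pref_trans {x y z} : pref x y -> pref y z -> pref x z.
Proof. exact: prefP.2. Qed.

Lemma near_le_above x0 hi : M hi -> le (ms x0) hi ->
  ((exists m, M m /\ strict le (ms x0) m) -> strict le (ms x0) hi) ->
  \forall x \near x0, le (ms x) hi.
Proof.
move=> Mhi le_m0hi above; have [/above lt_m0hi|m0_top] := pselect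
  (exists m, M m /\ strict le (ms x0) m).
  have near_not_hi : \forall x \near x0, ~ pref x hi.
    apply: (near_not_sectionl pref_closed hi x0) => x0_hi.
    apply: (strict_not_pref pref_mono lt_m0hi).
    exact: pref_trans (ms_indiff x0).2.2 x0_hi.
  apply: filterS near_not_hi => x nx_hi.
  suff /(chain_strict_of_not_pref prefP pref_mono M_chain (ms_indiff x).1 Mhi)[]
    : ~ pref (ms x) hi by [].
  by move=> msx_hi; apply: nx_hi (pref_trans (ms_indiff x).2.1 msx_hi).
apply: nearW => x; have [->//|neq] := pselect (ms x = ms x0).
case: (M_chain _ _ (ms_indiff x).1 (ms_indiff x0).1 neq) => [[le_xm0 _]|lt_m0x].
  exact: le_trans le_xm0 le_m0hi.
by case: m0_top; exists (ms x); split=> //; exact: (ms_indiff x).1.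
Qed.

Lemma near_le_below x0 lo : M lo -> le lo (ms x0) ->
  ((exists m, M m /\ strict le m (ms x0)) -> strict le lo (ms x0)) ->
  \forall x \near x0, le lo (ms x).
Proof.
move=> Mlo le_lom0 below; have [/below lt_lom0|m0_bot] := pselect
  (exists m, M m /\ strict le m (ms x0)).
  have near_not_lo : \forall x \near x0, ~ pref lo x.
    apply: (near_not_sectionr pref_closed lo x0) => lo_x0.
    apply: (strict_not_pref pref_mono lt_lom0).
    exact: pref_trans lo_x0 (ms_indiff x0).2.1.
  apply: filterS near_not_lo => x nlo_x.
  suff /(chain_strict_of_not_pref prefP pref_mono M_chain Mlo (ms_indiff x).1)[]
    : ~ pref lo (ms x) by [].
  by move=> lo_msx; apply: nlo_x (pref_trans lo_msx (ms_indiff x).2.2).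
apply: nearW => x; have [->//|neq] := pselect (ms x = ms x0).
case: (M_chain _ _ (ms_indiff x).1 (ms_indiff x0).1 neq) => [lt_xm0|[le_m0x _]].
  by case: m0_bot; exists (ms x); split=> //; exact: (ms_indiff x).1.
exact: le_trans le_lom0 le_m0x.
Qed.

Lemma continuous_comp_ms {R : realType} (u : X -> R) :
  (forall m, M m -> forall U : set X, nbhs m U ->
     exists lo hi, [/\ M lo /\ M hi, oint le lo hi m, oint le lo hi `<=` U,
       ((exists m', M m' /\ strict le m m') -> strict le m hi) &
       ((exists m', M m' /\ strict le m' m) -> strict le lo m)]) ->
  continuous u -> continuous (fun x => u (ms x)).
Proof.
move=> M_intervals u_cont x0; apply/cvgrPdist_lt => e e_gt0.
have /(M_intervals _ (ms_indiff x0).1)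
    [lo [hi [[Mlo Mhi] [le_lom0 le_m0hi] interval_sub above below]]] :
    \forall t \near ms x0, `|u (ms x0) - u t| < e.
  by move: (u_cont (ms x0)) => /cvgrPdist_lt; apply.
near=> x; apply: interval_sub; split; near: x.
  exact: near_le_below Mlo le_lom0 below.
exact: near_le_above Mhi le_m0hi above.
Unshelve. all: by end_near.
Qed.

End ContinuityOfIndifferentChainPoint.

Theorem lemma13 (R : realType) (X : topologicalType)
  (d : X -> X -> R) (le : X -> X -> Prop) (M : set X)
  (pref : X -> X -> Prop) :
  connected [set: X] ->
  locally_compact [set: X] ->
  polish R X ->
  compatible_metric d ->
  partial_order le ->
  (* (i) *)
  (exists m1 m2, M m1 /\ M m2 /\ m1 <> m2) ->
  connected M ->
  (forall m m', M m -> M m' -> m <> m' -> strict le m m' \/ strict le m' m) ->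
  (* (ii) *)
  (forall m, M m -> forall U : set X, nbhs m U ->
     exists lo hi, [/\ M lo /\ M hi, oint le lo hi m, oint le lo hi `<=` U,
       ((exists m', M m' /\ strict le m m') -> strict le m hi) &
       ((exists m', M m' /\ strict le m' m) -> strict le lo m)]) ->
  (* (iii) *)
  (forall s : nat -> X, bounded_seq d s ->
     exists lo hi, M lo /\ M hi /\
       exists N : nat, forall n, (N <= n)%N -> le lo (s n) /\ le (s n) hi) ->
  preference pref -> continuous_pref pref -> strictly_monotone le pref ->
  (forall x, exists! m, M m /\ indiff pref x m) /\
  (forall mstar : X -> X, (forall x, M (mstar x) /\ indiff pref x (mstar x)) ->
   forall u : X -> R, continuous u -> strictly_increasing le u ->
     continuous (fun x => u (mstar x)) /\ represents pref (fun x => u (mstar x))).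
Proof.
move=> _ _ _ [d_metric _] [_ [_ le_trans]] _ M_conn M_chain M_intervals
  M_bounds prefP pref_closed pref_mono.
split=> [x | ms ms_indiff u u_cont u_incr].
  have [lo [hi [Mlo [Mhi [N /(_ N (leqnn N)) [le_lox le_xhi]]]]]] :=
    M_bounds _ (bounded_seq_cst x d_metric).
  have [m [Mm x_m]] := exists_indiff_connected prefP pref_closed M_conn Mlo Mhi
    (pref_of_le prefP pref_mono le_lox) (pref_of_le prefP pref_mono le_xhi).
  exists m; split=> // m' [Mm' x_m'].
  exact: (chain_indiff_unique prefP pref_mono M_chain Mm Mm' x_m x_m').
split.
  exact: (continuous_comp_ms le_trans prefP pref_closed pref_mono M_chain
    ms_indiff u M_intervals u_cont).
exact: (represents_comp_ms prefP pref_mono M_chain ms_indiff u u_incr).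
Qed.
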